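(* Let $(X,d)$ be a finite metric space and $k$ a positive integer. For a nonempty $S\subseteq X$ and $t\in[k]$, let $(\mathcal{C}_1,\dots,\mathcal{C}_t)$ be the output of $\mathtt{recMSD}(S,t)$, and let $\operatorname{opt}_i(S)$ denote the cost of an optimal $i$-clustering of $S$. Then for every $\varepsilon\in[0,1)$ and every $r\in\{1,\dots,t\}$, $$\Pr\left[\operatorname{cost}(\mathcal{C}_r)\le \frac{\operatorname{opt}_r(S)}{1-\varepsilon}\right]\ge \varepsilon^{r-1}.$$
   Context: An $i$-clustering of a set $S$ is a collection of at most $i$ subsets whose union is $S$; its cost is $\operatorname{cost}(\mathcal{C})=\sum_{C\in\mathcal{C}}\operatorname{diam}(C)$ with $\operatorname{diam}(C)=\max_{p,q\in C}d(p,q)$. $\operatorname{Ball}(x,R)=\{z\in X: d(x,z)\le R\}$. The randomized procedure $\mathtt{recMSD}(S,t)$ (for nonempty $S\subseteq X$, $t\in[k]$) is: set $\mathcal{C}_i\gets\{S\}$ for all $i\in\{1,\dots,t\}$; if $t=1$ or $|S|=1$, return $(\mathcal{C}_1,\dots,\mathcal{C}_t)$. Otherwise let $x,y\in S$ with $d(x,y)=\operatorname{diam}(S)$, choose $R\in[0,\operatorname{diam}(S)]$ uniformly at random, let $S_1=S\cap\operatorname{Ball}(x,R)$ and $S_2=S\setminus\operatorname{Ball}(x,R)$, compute (with independent randomness) $\mathcal{A}=\mathtt{recMSD}(S_1,t-1)$ and $\mathcal{B}=\mathtt{recMSD}(S_2,t-1)$; then for all $i,j\in\{1,\dots,t-1\}$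 with $i+j\le t$, if $\operatorname{cost}(\mathcal{A}_i\cup\mathcal{B}_j)<\operatorname{cost}(\mathcal{C}_{i+j})$ set $\mathcal{C}_{i+j}\gets\mathcal{A}_i\cup\mathcal{B}_j$. Return $(\mathcal{C}_1,\dots,\mathcal{C}_t)$. *)

From HB Require Import structures.
From mathcomp Require Import all_boot all_order all_algebra.
From mathcomp Require Import all_classical all_reals all_analysis.
Set Implicit Arguments. Unset Strict Implicit. Unset Printing Implicit Defensive.
Import Order.TTheory GRing.Theory Num.Theory.
Import numFieldNormedType.Exports.
Local Open Scope ring_scope.

Section MSD.
Variables (R : realType) (T : finType) (d : T -> T -> R).

Definition is_metric : Prop :=
  [/\ forall x y, 0 <= d x y,
      forall x y, d x y = 0 <-> x = y,
      forall x y, d x y = d y x &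
      forall x y z, d x z <= d x y + d y z].

Definition diam (C : {set T}) : R :=
  \big[Num.max/0]_(p in C) \big[Num.max/0]_(q in C) d p q.

Definition cost (C : {set {set T}}) : R := \sum_(A in C) diam A.

Definition is_clustering (i : nat) (S : {set T}) (C : {set {set T}}) : Prop :=
  (#|C| <= i)%N /\ \bigcup_(A in C) A = S.

(* pick S : the point x of the algorithm, i.e. some x in S such that
   d(x,y) = diam(S) for some y in S.  The theorem quantifies over all
   such selection rules. *)
Definition diam_selector (pick : {set T} -> T) : Prop :=
  forall S : {set T}, (0 < #|S|)%N ->
    pick S \in S /\ exists2 y, y \in S & d (pick S) y = diam S.

Variables (k : nat) (pick : {set T} -> T).

(* An output (C_1,...,C_t) of recMSD is stored as a finite function on
   'I_k.+1, entry i holding C_i (entries 0 and > t are irrelevant). *)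
Definition out := {ffun 'I_k.+1 -> {set {set T}}}.

Definition init_out (S : {set T}) : out := [ffun _ => [set S]].

Definition combine_step (t : nat) (a b : out) (c : out) (ij : nat * nat) : out :=
  let i := ij.1 in let j := ij.2 in
  if ((i + j <= t)%N && (i + j <= k)%N) &&
     (cost (a (inord i) :|: b (inord j)) < cost (c (inord (i + j))))
  then [ffun l => if l == inord (i + j) then a (inord i) :|: b (inord j)
                  else c l]
  else c.

Definition combine (t : nat) (S : {set T}) (a b : out) : out :=
  foldl (combine_step t a b) (init_out S)
        [seq (i, j) | i <- iota 1 t.-1, j <- iota 1 t.-1].

Definition ball_part (S : {set T}) (x : T) (r : R) : {set T} :=
  [set z in S | d x z <= r].

(* recMSD_dist t S o = probability that recMSD(S,t) outputs o.
   R is uniform on [0, diam S] (density 1/diam S w.r.t. Lebesgue measure),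
   and the two recursive calls use independent randomness (product of
   the two output distributions). *)
Fixpoint recMSD_dist (t : nat) (S : {set T}) : out -> R :=
  match t with
  | 0 => fun o => (o == init_out S)%:R
  | t'.+1 =>
    if (t' == 0)%N || (#|S| <= 1)%N then fun o => (o == init_out S)%:R
    else fun o =>
      let D := diam S in
      let x := pick S in
      D^-1 * Rintegral (@lebesgue_measure R) `[0, D]%classic
        (fun r =>
           \sum_(a : out) \sum_(b : out)
             recMSD_dist t' (ball_part S x r) a *
             recMSD_dist t' (S :\: ball_part S x r) b *
             (o == combine t'.+1 S a b)%:R)
  end.

Definition recMSD_prob (t : nat) (S : {set T}) (P : pred out) : R :=
  \sum_(o : out | P o) recMSD_dist t S o.

End MSD.

(* Let x = pick S, D = diam S and let Copt be an r-clustering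
   of S.  The ball of radius R around x splits a cluster C only if R lies in
   [min_{p in C} d(x,p), max_{q in C} d(x,q)], an interval of length at most
   diam C by the triangle inequality; hence with probability at least
   1 - cost(Copt)/D no cluster is split.  Copt then restricts to clusterings of
   S_1 and S_2 into i and j clusters with i + j = r and i, j >= 1, so by
   induction both recursive calls succeed with probability at least
   eps^(i-1) eps^(j-1) = eps^(r-2), and the combination step then finds an
   r-clustering of cost at most cost(Copt)/(1-eps).  If cost(Copt) >= (1-eps) D
   the trivial clustering {S} already succeeds; otherwise
   1 - cost(Copt)/D > eps. *)

From HB Require Import structures.
From mathcomp Require Import all_boot all_order all_algebra.
From mathcomp Require Import all_classical all_reals all_analysis.
From mathcomp Require Import zify lra.
Import Order.TTheory GRing.Theory Num.Theory.
Local Open Scope ring_scope.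
Set Implicit Arguments. Unset Strict Implicit. Unset Printing Implicit Defensive.

Section Diameter.
Variables (R : realType) (T : finType) (d : T -> T -> R).

Lemma diam_ge0 (C : {set T}) : 0 <= diam d C.
Proof. exact: bigmax_ge_id. Qed.

Lemma dist_le_diam (C : {set T}) p q : p \in C -> q \in C -> d p q <= diam d C.
Proof.
move=> pC qC; apply: le_trans (le_bigmax_cond _ _ pC).
exact: (le_bigmax_cond _ _ qC).
Qed.

Lemma diam_le (C : {set T}) c :
  0 <= c -> {in C &, forall p q, d p q <= c} -> diam d C <= c.
Proof.
move=> c0 dC; apply: bigmax_le => // p pC; apply: bigmax_le => // q qC.
exact: dC.
Qed.

Lemma cost_ge0 (P : {set {set T}}) : 0 <= cost d P.
Proof. by apply: sumr_ge0 => C _; apply: diam_ge0. Qed.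

Lemma cost_setU_le (P Q : {set {set T}}) : cost d (P :|: Q) <= cost d P + cost d Q.
Proof.
rewrite /cost !(big_mkcond (fun C => C \in _)) -big_split /=.
apply: ler_sum => C _; rewrite !inE.
by case: (C \in P); case: (C \in Q); rewrite /= ?addr0 ?add0r ?lerDl ?diam_ge0.
Qed.

Lemma cost_setID (P Q : {set {set T}}) :
  cost d P = cost d (P :&: Q) + cost d (P :\: Q).
Proof. by rewrite /cost (big_setID Q). Qed.

Lemma cost_set1 (C : {set T}) : cost d [set C] = diam d C.
Proof. by rewrite /cost big_set1. Qed.

Lemma cost_clustering1 (S : {set T}) P :
  (0 < #|S|)%N -> is_clustering 1 S P -> cost d P = diam d S.
Proof.
move=> S0 [P1 PS]; have [P0|P0] := eqVneq #|P| 0%N.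
  by move: S0; rewrite -PS (cards0_eq P0) big_set0 cards0.
have /cards1P[C PC] : #|P| == 1%N by rewrite eqn_leq P1 lt0n P0.
by move: PS; rewrite PC big_set1 => ->; rewrite cost_set1.
Qed.

Hypothesis metric_d : is_metric d.

Lemma diam_gt0 (S : {set T}) : (1 < #|S|)%N -> 0 < diam d S.
Proof.
case/card_gt1P => p [q [pS qS pq]]; case: metric_d => d0 d_eq0 _ _.
apply: lt_le_trans (dist_le_diam pS qS); rewrite lt_neqAle d0 andbT.
by apply/eqP => /esym/d_eq0/eqP; rewrite (negbTE pq).
Qed.

Lemma diam_card_le1 (S : {set T}) : (#|S| <= 1)%N -> diam d S = 0.
Proof.
move=> /card_le1P S1; apply/le_anti; rewrite diam_ge0 andbT.
apply: diam_le => // p q pS qS; have := S1 p pS q; rewrite qS => /esym/eqP ->.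
by case: metric_d => _ d_eq0 _ _; rewrite (proj2 (d_eq0 p p)).
Qed.

End Diameter.

Lemma bigcup_split (T : finType) (P : {set {set T}}) (S A : {set T}) :
  \bigcup_(C in P) C = S -> A \subset S ->
  (forall C, C \in P -> ~~ (C \subset A) -> C \subset S :\: A) ->
  \bigcup_(C in P :&: [set B : {set T} | B \subset A]) C = A /\
  \bigcup_(C in P :\: [set B : {set T} | B \subset A]) C = S :\: A.
Proof.
move=> PS AS sepP.
have cover : forall z, z \in S -> exists2 C, C \in P & z \in C.
  by move=> z; rewrite -PS => /finset.bigcupP[C CP zC]; exists C.
split; apply/setP => z; apply/finset.bigcupP/idP.
- by case=> C; rewrite !inE => /andP[_ /fintype.subsetP]; apply.
- move=> zA; have [C CP zC] := cover z (fintype.subsetP AS z zA); exists C => //.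
  rewrite !inE CP /=; apply: contraT => /(sepP C CP) /fintype.subsetP/(_ z zC).
  by rewrite inE zA.
- by case=> C /setDP[CP]; rewrite inE => nCA; apply: fintype.subsetP; exact: sepP.
- move=> zSA; have [C CP zC] := cover z (fintype.subsetP (subsetDl S A) z zSA).
  exists C => //.
  rewrite !inE CP andbT; apply: contraT => /negPn /fintype.subsetP/(_ z zC).
  by move: zSA; rewrite inE => /andP[/negbTE ->].
Qed.

Section Combine.
Variables (R : realType) (T : finType) (d : T -> T -> R) (k : nat).

Lemma combine_step_le t (a b c : out T k) ij l :
  cost d (combine_step d t a b c ij l) <= cost d (c l).
Proof.
rewrite /combine_step; case: ifP => // /andP[_ lt_c]; rewrite ffunE.
by case: eqP => [->|_]; first exact: ltW.
Qed.

Lemma combine_step_le_setU t (a b c : out T k) i j :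
  (i + j <= t)%N -> (i + j <= k)%N ->
  cost d (combine_step d t a b c (i, j) (inord (i + j))) <=
  cost d (a (inord i) :|: b (inord j)).
Proof.
move=> ijt ijk; rewrite /combine_step /= ijt ijk /=.
by case: ltP => // _; rewrite ffunE eqxx.
Qed.

Lemma foldl_combine_step_le t (a b : out T k) s c l :
  cost d (foldl (combine_step d t a b) c s l) <= cost d (c l).
Proof.
elim: s c => [|ij s IHs] c //=.
exact: le_trans (IHs _) (combine_step_le _ _ _ _ _ _).
Qed.

Lemma foldl_combine_step_le_setU t (a b : out T k) s c i j :
  (i, j) \in s -> (i + j <= t)%N -> (i + j <= k)%N ->
  cost d (foldl (combine_step d t a b) c s (inord (i + j))) <=
  cost d (a (inord i) :|: b (inord j)).
Proof.
move=> + ijt ijk; elim: s c => [|ij s IHs] c //=.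
rewrite inE => /orP[/eqP <-|/IHs //].
apply: le_trans (foldl_combine_step_le _ _ _ _ _ _) _.
exact: combine_step_le_setU.
Qed.

Lemma combine_le_diam t S (a b : out T k) l :
  cost d (combine d t S a b l) <= diam d S.
Proof.
apply: le_trans (foldl_combine_step_le _ _ _ _ _ _) _.
by rewrite ffunE cost_set1.
Qed.

Lemma combine_le_setU t S (a b : out T k) i j :
  (0 < i)%N -> (0 < j)%N -> (i + j <= t)%N -> (i + j <= k)%N ->
  cost d (combine d t S a b (inord (i + j))) <=
  cost d (a (inord i) :|: b (inord j)).
Proof.
move=> i0 j0 ijt ijk; apply: foldl_combine_step_le_setU => //.
by apply/allpairsP; exists (i, j); split; rewrite //= mem_iota; lia.
Qed.

End Combine.

Section Lebesgue.
Variable R : realType.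
Notation mu := (@lebesgue_measure R).

Lemma lebesgue_measure_itv_cc (a b : R) :
  mu `[a, b]%classic = if a < b then (b - a)%:E else 0%E.
Proof. by have := lebesgue_measure_itv `[a, b]; rewrite /= -EFinB. Qed.

Lemma integrable_itv_bounded (a b : R) (f : R -> R) M :
  measurable_fun setT f -> (forall x, `|f x| <= M) ->
  mu.-integrable `[a, b]%classic (EFin \o f).
Proof.
move=> mf fM; apply: measurable_bounded_integrable.
- exact: measurable_itv.
- change (mu `[a, b]%classic < +oo)%E.
  by rewrite lebesgue_measure_itv_cc; case: ifP; rewrite ?ltry.
- exact: measurable_funS mf.
- rewrite /bounded_near; near=> M' => x _ /=; apply: le_trans (fM x) _.
  by near: M'; apply: nbhs_pinfty_ge; exact: num_real.
Unshelve. all: end_near. Qed.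

Lemma fine_lebesgue_itv (a b : R) : a <= b -> fine (mu `[a, b]%classic) = b - a.
Proof.
rewrite lebesgue_measure_itv_cc le_eqVlt => /predU1P[<-|->] //.
by rewrite ltxx subrr.
Qed.

Lemma indic_itvE (m M x : R) : \1_(`[m, M]%classic) x = (m <= x <= M)%R%:R :> R.
Proof.
have xmM : (x \in `[m, M]%classic) = (m <= x <= M).
  apply/idP/idP => [/set_mem|mxM]; first by rewrite /= in_itv.
  by apply: mem_set; rewrite /= in_itv.
by rewrite indicE xmM.
Qed.

Lemma Rintegral_indic_itv_le (a b m M c : R) : M - m <= c -> 0 <= c ->
  \int[mu]_(x in `[a, b]%classic) \1_(`[m, M]%classic) x <= c.
Proof.
move=> Mmc c0; rewrite /Rintegral integral_indic; first last.
- exact: measurable_itv.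
- exact: measurable_itv.
have mu_le : (mu (`[m, M]%classic `&` `[a, b]%classic) <= c%:E)%E.
  have muI : (mu `[m, M]%classic <= c%:E)%E.
    by rewrite lebesgue_measure_itv_cc; case: ifP => _; rewrite lee_fin.
  apply: le_trans muI; apply: le_measure; last exact: subIsetl.
  - by apply/mem_set; apply: measurableI; exact: measurable_itv.
  - by apply/mem_set; exact: measurable_itv.
rewrite -lee_fin fineK // ge0_fin_numE ?measure_ge0 //.
exact: le_lt_trans mu_le (ltry _).
Qed.

End Lebesgue.

Lemma Rintegral_sum d' (X : measurableType d') (R : realType)
    (mu : {measure set X -> \bar R}) (D : set X) I (s : seq I) (P : pred I)
    (f : I -> X -> R) :
  measurable D -> (forall i, P i -> mu.-integrable D (EFin \o f i)) ->
  \int[mu]_(x in D) (\sum_(i <- s | P i) f i x) =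
  \sum_(i <- s | P i) \int[mu]_(x in D) f i x.
Proof.
move=> mD intf; elim: s => [|i s IHs].
  by under eq_Rintegral do rewrite big_nil; rewrite big_nil Rintegral_cst // mul0r.
under eq_Rintegral do rewrite big_cons; rewrite big_cons.
case Pi: (P i) => //; rewrite RintegralD ?IHs //; first exact: intf.
rewrite (_ : EFin \o _ = fun x => \sum_(j <- s | P j) (EFin \o f j) x).
  exact: integrable_sum.
by apply/funext => x; rewrite /= sumEFin.
Qed.

Section BallPart.
Variables (R : realType) (T : finType) (d : T -> T -> R) (S : {set T}) (x : T).

Lemma ball_part_eqE (U : {set T}) (r : R) : (ball_part d S x r == U) =
  (U \subset S) &&
  all (fun z => (z \in S) ==> ((d x z <= r) == (z \in U))) (index_enum T).
Proof.
apply/eqP/andP => [<-|[US /allP sameU]].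
  split; first by apply/fintype.subsetP => z; rewrite inE => /andP[].
  by apply/allP => z _; apply/implyP => zS; rewrite inE zS.
apply/setP => z; rewrite inE; case zS: (z \in S) => /=.
  by have /implyP/(_ zS)/eqP := sameU z (mem_index_enum z).
by apply/esym/negbTE; exact: (contraFN (fintype.subsetP US z) zS).
Qed.

Lemma measurable_ball_part_eq (U : {set T}) :
  measurable_fun setT (fun r : R => ball_part d S x r == U).
Proof.
under eq_fun do rewrite ball_part_eqE.
apply: measurable_and; first exact: measurable_cst.
elim: (index_enum T) => [|z s IHs] /=; first exact: measurable_cst.
apply: measurable_and => //; case: (z \in S) => /=; last exact: measurable_cst.
have mle : measurable_fun setT (fun r : R => d x z <= r).
  by apply: measurable_realfun.measurable_fun_ler => //; exact: measurable_cst.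
case: (z \in U); first by under eq_fun do rewrite eqb_id.
by under eq_fun do rewrite eqbF_neg; exact: measurable_neg.
Qed.

Lemma measurable_fun_ball_part (G : {set T} -> R) :
  measurable_fun setT (fun r : R => G (ball_part d S x r)).
Proof.
rewrite (_ : (fun r => _) = fun r : R =>
    \sum_(U : {set T}) (if ball_part d S x r == U then G U else 0)).
  apply: measurable_sum => U; apply: measurable_fun_ifT.
  - exact: measurable_ball_part_eq.
  - exact: measurable_cst.
  - exact: measurable_cst.
apply/funext => r; rewrite (bigD1 (ball_part d S x r)) //= eqxx big1 ?addr0 //.
by move=> U /negbTE; rewrite eq_sym => ->.
Qed.

Lemma integrable_ball_part (a b : R) (G : {set T} -> R) :
  (@lebesgue_measure R).-integrable `[a, b]%classic
    (EFin \o (fun r => G (ball_part d S x r))).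
Proof.
apply: (@integrable_itv_bounded _ _ _ _ (\sum_U `|G U|)).
  exact: measurable_fun_ball_part.
move=> r; rewrite (bigD1 (ball_part d S x r)) //= lerDl.
by apply: sumr_ge0.
Qed.

End BallPart.

Lemma sum_eq_natr (I : finType) (R : realType) (P : pred I) (c : I) :
  \sum_(o | P o) (o == c)%:R = (P c)%:R :> R.
Proof.
rewrite big_mkcond (bigD1 c) //= eqxx big1 ?addr0; first by case: (P c).
by move=> o /negbTE ->; case: (P o).
Qed.

Section Distribution.
Variables (R : realType) (T : finType) (d : T -> T -> R) (k : nat).
Variable pick : {set T} -> T.
Notation mu := (@lebesgue_measure R).
Notation dist := (@recMSD_dist R T d k pick).
Notation prob := (@recMSD_prob R T d k pick).
Implicit Types (S U : {set T}) (P : pred (out T k)).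

Definition split_prob t (S U : {set T}) (P : pred (out T k)) : R :=
  \sum_(a : out T k) \sum_(b : out T k)
    dist t U a * dist t (S :\: U) b * (P (combine d t.+1 S a b))%:R.

Lemma recMSD_dist_trivial t S : (t <= 1)%N || (#|S| <= 1)%N ->
  dist t S = fun o => (o == init_out k S)%:R.
Proof. by case: t => [|t] //=; rewrite ltnS leqn0 => ->. Qed.

Lemma recMSD_prob_trivial t S P : (t <= 1)%N || (#|S| <= 1)%N ->
  prob t S P = (P (init_out k S))%:R.
Proof.
by move=> triv; rewrite /recMSD_prob recMSD_dist_trivial // sum_eq_natr.
Qed.

Lemma recMSD_dist_step t S : (0 < t)%N -> (1 < #|S|)%N ->
  dist t.+1 S = fun o => (diam d S)^-1 * \int[mu]_(r in `[0, diam d S]%classic)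
    \sum_(a : out T k) \sum_(b : out T k)
      dist t (ball_part d S (pick S) r) a *
      dist t (S :\: ball_part d S (pick S) r) b *
      (o == combine d t.+1 S a b)%:R.
Proof. by rewrite lt0n => /negbTE t0 S1 /=; rewrite t0 /= leqNgt S1. Qed.

Lemma recMSD_dist_ge0 t S o : 0 <= dist t S o.
Proof.
elim: t S o => [|t IHt] S o; first by rewrite recMSD_dist_trivial.
have [triv|] := boolP ((t.+1 <= 1)%N || (#|S| <= 1)%N).
  by rewrite recMSD_dist_trivial.
rewrite negb_or -!ltnNge ltnS => /andP[t0 S1]; rewrite recMSD_dist_step //.
rewrite mulr_ge0 ?invr_ge0 ?diam_ge0 //; apply: Rintegral_ge0 => r _.
by do 2 (apply: sumr_ge0 => ? _); rewrite !mulr_ge0 ?recMSD_dist_ge0.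
Qed.

Lemma split_prob_ge0 t S U P : 0 <= split_prob t S U P.
Proof.
by do 2 (apply: sumr_ge0 => ? _); rewrite !mulr_ge0 ?recMSD_dist_ge0.
Qed.

Lemma recMSD_prob_step t S P : (0 < t)%N -> (1 < #|S|)%N ->
  prob t.+1 S P = (diam d S)^-1 *
    \int[mu]_(r in `[0, diam d S]%classic)
      split_prob t S (ball_part d S (pick S) r) P.
Proof.
move=> t0 S1; rewrite /recMSD_prob recMSD_dist_step // -big_distrr /=.
rewrite -Rintegral_sum; last 2 first.
- exact: measurable_itv.
- by move=> o _; exact: (integrable_ball_part d S (pick S) _ _ (fun U =>
    \sum_(a : out T k) \sum_(b : out T k) dist t U a * dist t (S :\: U) b *
      (o == combine d t.+1 S a b)%:R)).
congr (_ * _); apply: eq_Rintegral => r _.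
rewrite exchange_big; apply: eq_bigr => a _.
rewrite exchange_big; apply: eq_bigr => b _.
by rewrite -big_distrr /= sum_eq_natr.
Qed.

Lemma split_prob_certain t S U P : (forall a b, P (combine d t.+1 S a b)) ->
  split_prob t S U P = prob t U xpredT * prob t (S :\: U) xpredT.
Proof.
move=> Pab; rewrite /recMSD_prob big_distrl; apply: eq_bigr => a _.
by rewrite big_distrr; apply: eq_bigr => b _; rewrite Pab mulr1.
Qed.

Lemma split_prob_ge_mul t S U P P1 P2 :
  (forall a b, P1 a -> P2 b -> P (combine d t.+1 S a b)) ->
  prob t U P1 * prob t (S :\: U) P2 <= split_prob t S U P.
Proof.
move=> P12; rewrite /recMSD_prob big_distrl big_mkcond /=.
apply: ler_sum => a _; case: ifP => P1a; last first.
  by apply: sumr_ge0 => b _; rewrite !mulr_ge0 ?recMSD_dist_ge0.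
rewrite big_distrr big_mkcond /=; apply: ler_sum => b _.
by case: ifP => P2b; [rewrite P12 ?mulr1 | rewrite !mulr_ge0 ?recMSD_dist_ge0].
Qed.

Hypothesis metric_d : is_metric d.

Lemma recMSD_prob_step1 t S P : (0 < t)%N -> (1 < #|S|)%N ->
  (forall U, split_prob t S U P = 1) -> prob t.+1 S P = 1.
Proof.
move=> t0 S1 split1; rewrite recMSD_prob_step //.
under eq_Rintegral do rewrite split1.
rewrite Rintegral_cst; last exact: measurable_itv.
by rewrite mul1r fine_lebesgue_itv ?diam_ge0 // subr0 mulVf // gt_eqF // diam_gt0.
Qed.

Lemma recMSD_prob_predT t S : prob t S xpredT = 1.
Proof.
elim: t S => [|t IHt] S; first by rewrite recMSD_prob_trivial.
have [triv|] := boolP ((t.+1 <= 1)%N || (#|S| <= 1)%N).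
  by rewrite recMSD_prob_trivial.
rewrite negb_or -!ltnNge ltnS => /andP[t0 S1].
by apply: recMSD_prob_step1 => // U; rewrite split_prob_certain // !IHt mulr1.
Qed.

End Distribution.

Section CutIntervals.
Variables (R : realType) (T : finType) (d : T -> T -> R) (pick : {set T} -> T).
Hypotheses (metric_d : is_metric d) (pick_diam : diam_selector d pick).
Notation mu := (@lebesgue_measure R).
Implicit Types (S C : {set T}) (Copt : {set {set T}}).

(* The ball of radius [rho] around [pick S] separates two points of [C] only if
   [cut_lo S C <= rho < cut_hi S C]. *)
Definition cut_lo S C : R := \big[Num.min/diam d S]_(p in C) d (pick S) p.
Definition cut_hi S C : R := \big[Num.max/0]_(q in C) d (pick S) q.

Definition cut_count S Copt (rho : R) : R :=
  \sum_(C <- enum Copt) \1_(`[cut_lo S C, cut_hi S C]%classic) rho.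

Lemma cut_hi_sub_lo S C : (0 < #|S|)%N -> C \subset S ->
  cut_hi S C - cut_lo S C <= diam d C.
Proof.
move=> S0 CS; have [xS _] := pick_diam S0; case: metric_d => d0 _ _ d_tri.
have lo0 : 0 <= cut_lo S C.
  by apply: le_bigmin => [|p _]; [exact: diam_ge0 | exact: d0].
rewrite lerBlDr; apply: bigmax_le => [|q qC]; first by rewrite addr_ge0 ?diam_ge0.
rewrite addrC -lerBlDr; apply: le_bigmin => [|p pC]; rewrite lerBlDr.
  apply: le_trans (dist_le_diam d xS (fintype.subsetP CS q qC)) _.
  by rewrite lerDl diam_ge0.
by apply: le_trans (d_tri _ p q) _; rewrite lerD2l dist_le_diam.
Qed.

Lemma uncut_subset S C rho : C \subset S ->
  ~ (cut_lo S C <= rho <= cut_hi S C) ->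
  ~~ (C \subset ball_part d S (pick S) rho) ->
  C \subset S :\: ball_part d S (pick S) rho.
Proof.
move=> CS uncut /fintype.subsetPn[q qC qB]; apply/fintype.subsetP => z zC.
have zS := fintype.subsetP CS z zC; rewrite !inE zS andbT /=.
apply: contra_notN uncut => zB; move: qB; rewrite inE (fintype.subsetP CS q qC) /=.
rewrite -ltNge => Bq; apply/andP; split.
  exact: le_trans (bigmin_le_cond _ _ zC) zB.
exact: le_trans (ltW Bq) (le_bigmax_cond _ _ qC).
Qed.

Lemma uncut_lt_diam S Copt rho : (0 < #|S|)%N -> \bigcup_(C in Copt) C = S ->
  rho <= diam d S -> (forall C, C \in Copt -> ~ (cut_lo S C <= rho <= cut_hi S C)) ->
  rho < diam d S.
Proof.
move=> S0 coverS rhoD uncut; have [_ [y yS dy]] := pick_diam S0.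
have /finset.bigcupP[C CC yC] : y \in \bigcup_(C in Copt) C by rewrite coverS.
rewrite lt_neqAle rhoD andbT; apply: contra_notN (uncut C CC) => /eqP rhoE.
rewrite rhoE -dy; apply/andP; split; first exact: bigmin_le_cond.
exact: le_bigmax_cond.
Qed.

Lemma measurable_cut_count S Copt : measurable_fun setT (cut_count S Copt).
Proof.
apply: measurable_sum => C; apply: measurable_realfun.measurable_indic.
exact: measurable_itv.
Qed.

Lemma normr_cut_count_le S Copt rho : `|cut_count S Copt rho| <= #|Copt|%:R.
Proof.
rewrite cardE -sum1_size natr_sum; apply: le_trans (ler_norm_sum _ _ _) _.
apply: ler_sum => C _; rewrite indic_itvE.
by case: (_ <= _ <= _); rewrite ?normr1 ?normr0.
Qed.

Lemma integrable_cut_count S Copt (a b : R) :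
  mu.-integrable `[a, b]%classic (EFin \o cut_count S Copt).
Proof.
exact: integrable_itv_bounded (measurable_cut_count _ _) (normr_cut_count_le _ _).
Qed.

Lemma integrable_uncut_weight S Copt (c a b : R) :
  mu.-integrable `[a, b]%classic
    (EFin \o (fun rho => c * (1 - cut_count S Copt rho))).
Proof.
apply: (@integrable_itv_bounded _ _ _ _ (`|c| * (1 + #|Copt|%:R))).
  apply: measurable_realfun.measurable_funM; first exact: measurable_cst.
  apply: measurable_realfun.measurable_funB; first exact: measurable_cst.
  exact: measurable_cut_count.
move=> rho; rewrite normrM ler_wpM2l //; apply: le_trans (ler_normB _ _) _.
by rewrite normr1 lerD2l normr_cut_count_le.
Qed.

Lemma Rintegral_uncut_ge S Copt :
  (0 < #|S|)%N -> (forall C, C \in Copt -> C \subset S) ->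
  diam d S - cost d Copt <=
  \int[mu]_(rho in `[0, diam d S]%classic) (1 - cut_count S Copt rho).
Proof.
move=> S0 CS; rewrite RintegralB; first last.
- exact: integrable_cut_count.
- apply: (@integrable_itv_bounded _ _ _ _ 1); first exact: measurable_cst.
  by rewrite normr1.
- exact: measurable_itv.
rewrite Rintegral_cst; last exact: measurable_itv.
rewrite mul1r fine_lebesgue_itv ?diam_ge0 // subr0 lerD2l lerN2.
rewrite /cut_count Rintegral_sum; first last.
- by move=> C _; apply: (@integrable_itv_bounded _ _ _ _ 1);
    [apply: measurable_realfun.measurable_indic; exact: measurable_itv
    | move=> rho; rewrite indic_itvE; case: (_ <= _ <= _); rewrite ?normr1 ?normr0].
- exact: measurable_itv.
rewrite /cost -big_enum /= big_seq [leRHS]big_seq; apply: ler_sum => C.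
rewrite mem_enum => CC; apply: Rintegral_indic_itv_le; last exact: diam_ge0.
exact: cut_hi_sub_lo (CS C CC).
Qed.

End CutIntervals.

Section Success.
Variables (R : realType) (T : finType) (d : T -> T -> R) (k : nat).
Variables (pick : {set T} -> T) (eps : R).
Hypotheses (metric_d : is_metric d) (pick_diam : diam_selector d pick).
Hypothesis eps01 : 0 <= eps < 1.
Notation mu := (@lebesgue_measure R).
Implicit Types (S : {set T}) (Copt : {set {set T}}).

Definition success r (c : R) (o : out T k) : bool :=
  cost d (o (inord r)) <= c / (1 - eps).

Definition success_bound t : Prop :=
  forall S r Copt, (0 < #|S|)%N -> (1 <= r <= t)%N -> is_clustering r S Copt ->
  eps ^+ (r - 1) <= recMSD_prob d pick t S (success r (cost d Copt)).

Lemma le_div_1subr (c : R) : 0 <= c -> c <= c / (1 - eps).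
Proof.
case/andP: eps01 => eps0 eps1 c0; have eps1' : 0 < 1 - eps by rewrite subr_gt0.
by rewrite ler_pdivlMr // mulrBr mulr1 lerBlDr lerDl mulr_ge0.
Qed.

Lemma success_init r S Copt : (0 < #|S|)%N -> (r == 1)%N || (#|S| <= 1)%N ->
  is_clustering r S Copt -> success r (cost d Copt) (init_out k S).
Proof.
move=> S0 /orP[/eqP-> cl|S1 _]; rewrite /success ffunE cost_set1.
  by rewrite (cost_clustering1 d S0 cl) le_div_1subr ?diam_ge0.
rewrite diam_card_le1 // divr_ge0 ?cost_ge0 // subr_ge0.
by case/andP: eps01 => _ /ltW.
Qed.

Lemma success_bound1 : success_bound 1.
Proof.
move=> S r Copt S0 r1; have -> : r = 1%N by lia.
by move=> cl; rewrite recMSD_prob_trivial // success_init.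
Qed.

Lemma split_prob_uncut t S r Copt rho : (t < k)%N -> success_bound t ->
  (2 <= r <= t.+1)%N -> (1 < #|S|)%N -> is_clustering r S Copt ->
  0 <= rho <= diam d S ->
  (forall C, C \in Copt -> ~ (cut_lo d pick S C <= rho <= cut_hi d pick S C)) ->
  eps ^+ (r - 2) <=
  split_prob d pick t S (ball_part d S (pick S) rho) (success r (cost d Copt)).
Proof.
move=> tk IHt r2 S1 [cardC coverS] /andP[rho0 rhoD] uncut.
have S0 : (0 < #|S|)%N by apply: ltnW.
set B := ball_part d S (pick S) rho; set inB := [set C : {set T} | C \subset B].
have [cover1 cover2] : \bigcup_(C in Copt :&: inB) C = B /\
                       \bigcup_(C in Copt :\: inB) C = S :\: B.
  apply: bigcup_split => //.
    by apply/fintype.subsetP => z; rewrite inE => /andP[].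
  move=> C CC; apply: uncut_subset; last exact: uncut.
  by rewrite -coverS; exact: finset.bigcup_sup.
have B0 : (0 < #|B|)%N.
  have [xS _] := pick_diam S0; apply/card_gt0P; exists (pick S).
  by rewrite inE xS; case: metric_d => _ d_eq0 _ _; rewrite (proj2 (d_eq0 _ _)).
have SB0 : (0 < #|S :\: B|)%N.
  have [_ [y yS dy]] := pick_diam S0; apply/card_gt0P; exists y.
  by rewrite !inE yS andbT /= -ltNge dy; exact: uncut_lt_diam uncut.
have C1_gt0 : (0 < #|Copt :&: inB|)%N.
  move: B0; rewrite -cover1 => /card_gt0P[z /finset.bigcupP[C CC _]].
  by apply/card_gt0P; exists C.
have C2_gt0 : (0 < #|Copt :\: inB|)%N.
  move: SB0; rewrite -cover2 => /card_gt0P[z /finset.bigcupP[C CC _]].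
  by apply/card_gt0P; exists C.
move: cardC C1_gt0 C2_gt0; rewrite -(cardsID inB Copt).
move E1: #|Copt :&: inB| => c1; move E2: #|Copt :\: inB| => j => cardC c1_gt0 j_gt0.
(* [Copt] may have fewer than [r] clusters; asking for [r - j] and [j] clusters
   makes the two indices add up to [r]. *)
have cl1 : is_clustering (r - j) B (Copt :&: inB) by split; rewrite ?E1 //; lia.
have cl2 : is_clustering j (S :\: B) (Copt :\: inB) by split; rewrite ?E2.
have pB : eps ^+ (r - j - 1) <=
    recMSD_prob d pick t B (success (r - j) (cost d (Copt :&: inB))).
  by apply: IHt cl1 => //; lia.
have pSB : eps ^+ (j - 1) <=
    recMSD_prob d pick t (S :\: B) (success j (cost d (Copt :\: inB))).
  by apply: IHt cl2 => //; lia.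
have -> : (r - 2 = (r - j - 1) + (j - 1))%N by lia.
case/andP: eps01 => eps0 _; rewrite exprD.
apply: le_trans (ler_pM (exprn_ge0 _ eps0) (exprn_ge0 _ eps0) pB pSB) _.
apply: split_prob_ge_mul => a b; rewrite /success (cost_setID d Copt inB) mulrDl.
rewrite -[in inord r](_ : ((r - j) + j)%N = r); last by lia.
move=> ha hb; apply: le_trans (combine_le_setU _ _ _ _ _ _ _ _) _; try lia.
by apply: le_trans (cost_setU_le _ _ _) _; exact: lerD.
Qed.

Lemma uncut_le_split_prob t S r Copt rho : (t < k)%N -> success_bound t ->
  (2 <= r <= t.+1)%N -> (1 < #|S|)%N -> is_clustering r S Copt ->
  0 <= rho <= diam d S ->
  eps ^+ (r - 2) * (1 - cut_count d pick S Copt rho) <=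
  split_prob d pick t S (ball_part d S (pick S) rho) (success r (cost d Copt)).
Proof.
move=> tk IHt r2 S1 cl rhoD.
have [[C CC cutC]|uncut] :=
  pselect (exists2 C, C \in Copt & cut_lo d pick S C <= rho <= cut_hi d pick S C).
  apply: (le_trans _ (split_prob_ge0 d pick _ _ _ _)).
  rewrite mulr_ge0_le0 ?exprn_ge0 //; first by case/andP: eps01.
  rewrite subr_le0 /cut_count (bigD1_seq C) ?mem_enum ?enum_uniq //=.
  by rewrite indic_itvE cutC lerDl sumr_ge0 // => C' _; rewrite indic_itvE.
rewrite /cut_count big1_seq ?subr0 ?mulr1; last first.
  move=> C /andP[_]; rewrite mem_enum indic_itvE => CC.
  suff /negbTE -> : ~~ (cut_lo d pick S C <= rho <= cut_hi d pick S C) by [].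
  by apply/negP => cutC; apply: uncut; exists C.
by apply: split_prob_uncut => // C CC cutC; apply: uncut; exists C.
Qed.

Lemma Rintegral_split_prob_ge t S r Copt : (t < k)%N -> success_bound t ->
  (2 <= r <= t.+1)%N -> (1 < #|S|)%N -> is_clustering r S Copt ->
  eps ^+ (r - 2) * (diam d S - cost d Copt) <=
  \int[mu]_(rho in `[0, diam d S]%classic)
    split_prob d pick t S (ball_part d S (pick S) rho) (success r (cost d Copt)).
Proof.
move=> tk IHt r2 S1 cl; have S0 : (0 < #|S|)%N by apply: ltnW.
have CS C : C \in Copt -> C \subset S.
  by case: cl => _ <- CC; exact: finset.bigcup_sup.
have pow_ge0 : 0 <= eps ^+ (r - 2) by rewrite exprn_ge0 //; case/andP: eps01.
apply: le_trans (ler_wpM2l pow_ge0 (Rintegral_uncut_ge metric_d pick_diam S0 CS)) _.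
rewrite -RintegralZl; first last.
- apply: eq_integrable (integrable_uncut_weight d pick S Copt 1 _ _) => [|rho _].
    exact: measurable_itv.
  by rewrite /= mul1r.
- exact: measurable_itv.
apply: le_Rintegral; first exact: measurable_itv.
- exact: integrable_uncut_weight.
- exact: (integrable_ball_part d S (pick S) _ _
    (fun U => split_prob d pick t S U (success r (cost d Copt)))).
by move=> rho; rewrite /= in_itv /= => rhoD; exact: uncut_le_split_prob.
Qed.

Lemma success_boundS t :
  (0 < t)%N -> (t < k)%N -> success_bound t -> success_bound t.+1.
Proof.
move=> t0 tk IHt S r Copt S0 rt cl; case/andP: eps01 => eps0 eps1.
have pow_le1 : eps ^+ (r - 1) <= 1 by rewrite exprn_ile1 // ltW.
have [S1|S1] := leqP #|S| 1.
  by rewrite recMSD_prob_trivial ?S1 ?orbT // success_init ?S1 ?orbT.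
have [small|large] := leP (diam d S) (cost d Copt / (1 - eps)).
  rewrite recMSD_prob_step1 // => U.
  rewrite split_prob_certain ?recMSD_prob_predT ?mulr1 //.
  by move=> a b; exact: le_trans (combine_le_diam _ _ _ _ _ _) small.
have r2 : (2 <= r <= t.+1)%N.
  case: (ltnP 1 r) => r1; first by lia.
  have : success r (cost d Copt) (init_out k S).
    by apply: success_init => //; apply/orP; left; apply/eqP; lia.
  by rewrite /success ffunE cost_set1 leNgt large.
have D0 := diam_gt0 metric_d S1.
rewrite recMSD_prob_step //.
have weight_le := Rintegral_split_prob_ge tk IHt r2 S1 cl.
have invD0 : 0 <= (diam d S)^-1 by rewrite invr_ge0 ltW.
apply: le_trans (ler_wpM2l invD0 weight_le).
rewrite (_ : (r - 1 = (r - 2).+1)%N); last by lia.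
rewrite exprSr mulrCA ler_wpM2l ?exprn_ge0 // mulrC ler_pdivlMr //.
have : cost d Copt < diam d S * (1 - eps) by rewrite -ltr_pdivrMr // subr_gt0.
by move: (cost d Copt) (diam d S) => c D; nra.
Qed.

End Success.

Unset Implicit Arguments.

Theorem lemma2 (R : realType) (T : finType) (d : T -> T -> R)
  (k : nat) (pick : {set T} -> T) (S : {set T}) (t r : nat)
  (Copt : {set {set T}}) (eps : R) :
  is_metric d ->
  diam_selector d pick ->
  (0 < k)%N ->
  (0 < #|S|)%N ->
  (1 <= t <= k)%N ->
  (1 <= r <= t)%N ->
  is_clustering r S Copt ->
  (forall C, is_clustering r S C -> cost d Copt <= cost d C) ->
  0 <= eps < 1 ->
  recMSD_prob d pick t S
    (fun o : out T k => cost d (o (inord r)) <= cost d Copt / (1 - eps))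
  >= eps ^+ (r - 1).
Proof.
move=> metric_d pick_diam _ S0 tk rt cl _ eps01.
have bound u : (1 <= u <= k)%N -> success_bound d k pick eps u.
  elim: u => [//|[|u] IHu] uk; first exact: success_bound1.
  by apply: success_boundS => //; apply: IHu; lia.
exact: bound.
Qed.
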